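(* Let $F$ be an ordered forest with priority forest $P$ and priority traversal $\tau$. Then $\tau^{-1}$ is the Jordan–Hölder permutation of a unique maximal chain of $I_P=[\hat0,P]$.
   Context: $[n]=\{1,\dots,n\}$, $[n]_0=\{0,\dots,n\}$. An ordered $(m,n)$-forest is a rooted forest with $n+1$ nodes and $m$ edges whose component trees $T_0,\dots,T_{n-m}$ are totally ordered, with unlabeled roots marked $\circ,\circ_1,\dots,\circ_{n-m}$, and non-root vertices labeled bijectively by $[m]$. Priority search: initially only the children of $\circ$ are unblocked; at each step visit the unblocked unvisited node with the smallest label and unblock its children; when a tree is exhausted, move to the next tree, visit its root and unblock its children. Steps are numbered $1,\dots,n$ (the visit of $\circ$ is not counted). The priority traversal $\tau$ is the partial permutation $[n]\to[m]$ sending step $i$ to the label of the node visited at step $i$, undefined when that node is a root; $\tau^{-1}:[m]\to[n]$ is its inverse. The priority forest $P$ is obtained by relabeling each node by its visiting step, with $\circ$ labeled $0$. A priority forest on $[n]_0$ is a rooted forest with vertex set $[n]_0$ whose component trees are increasing (each non-root vertex has a larger label than its parent) and such that for $j<k$ every label of the $j$-th tree is smaller than every label of the $k$-th tree. $\Pi(n)$ is the poset of priority forests on $[n]_0$ ordered by inclusion of edge sets, with an extra top element; $\hat0$ is the edgeless forest. For priority forests $Q\lessdot Q'$ (one edge added), $\lambda(Q,Q')$ is the larger endpoint of the edge in $E(Q')\setminus E(Q)$. A maximal chain $\hat0=P_0\lessdot\cdots\lessdot P_m=P$ has Jordan–Hölder permutation $[m]\to[n]$, $i\mapsto\lambda(P_{i-1},P_i)$.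 *)

From mathcomp Require Import all_boot.
Set Implicit Arguments. Unset Strict Implicit. Unset Printing Implicit Defensive.

(** * Ordered (m,n)-forests
   Nodes are encoded as [nat + nat]:
     [inl j]  = the root [o_j] of the j-th tree (j = 0..n-m; [inl 0] is [o]),
     [inr i]  = the non-root vertex labelled i (i = 1..m). *)

Definition up (par : nat -> nat + nat) (v : nat + nat) : nat + nat :=
  match v with inl j => inl j | inr x => par x end.

Definition is_root_node (v : nat + nat) : bool :=
  if v is inl _ then true else false.

Definition is_ordforest (m n : nat) (par : nat -> nat + nat) : Prop :=
  m <= n /\
  (forall i, 1 <= i <= m ->
     match par i with inl j => j <= n - m | inr k => 1 <= k <= m end) /\
  (* acyclicity: every labelled vertex reaches a root *)
  (forall i, 1 <= i <= m -> exists k, is_root_node (iter k (up par) (inr i))).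

Definition kids (m : nat) (par : nat -> nat + nat) (v : nat + nat) : seq nat :=
  [seq i <- iota 1 m | par i == v].

(** Priority search. [fr] = unblocked unvisited labels, [j] = current tree.
    Returns the nodes visited at the successive steps. *)
Fixpoint psearch (m n : nat) (par : nat -> nat + nat)
    (fuel j : nat) (fr : seq nat) : seq (nat + nat) :=
  match fuel with
  | 0 => [::]
  | fuel'.+1 =>
    if fr is y :: _ then
      let x := foldl minn y fr in
      inr x :: psearch m n par fuel' j (rem x fr ++ kids m par (inr x))
    else if j < n - m then
      inl j.+1 :: psearch m n par fuel' j.+1 (kids m par (inl j.+1))
    else [::]
  end.

(** visits at steps 1..n (the visit of [o] is step 0, not recorded) *)
Definition visit_order (m n : nat) (par : nat -> nat + nat) : seq (nat + nat) :=
  psearch m n par n 0 (kids m par (inl 0)).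

Definition step_of (m n : nat) (par : nat -> nat + nat) (v : nat + nat) : nat :=
  if v == inl 0 then 0 else (index v (visit_order m n par)).+1.

Definition tau_inv (m n : nat) (par : nat -> nat + nat) (x : nat) : nat :=
  step_of m n par (inr x).

(** Priority forests on [n]_0, as sets of oriented edges (parent, child). *)
Definition edge n := ('I_n.+1 * 'I_n.+1)%type.

Definition prio_forest (m n : nat) (par : nat -> nat + nat) : {set edge n} :=
  [set ((inord (step_of m n par (par i.+1)) : 'I_n.+1),
        (inord (step_of m n par (inr i.+1)) : 'I_n.+1)) | i : 'I_m].

Definition adj n (E : {set edge n}) : rel 'I_n.+1 :=
  fun x y => ((x, y) \in E) || ((y, x) \in E).

Definition is_prio_forest n (E : {set edge n}) : Prop :=
  (* rooted forest with increasing trees: each vertex has at most one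
     parent, and the parent is smaller *)
  (forall e, e \in E -> (e.1 < e.2)%N) /\
  (forall e e', e \in E -> e' \in E -> e.2 = e'.2 -> e = e') /\
  (* trees can be ordered so that labels of earlier trees are smaller *)
  (forall x y, ~~ connect (adj E) x y ->
     (forall u v, connect (adj E) x u -> connect (adj E) y v -> (u < v)%N) \/
     (forall u v, connect (adj E) x u -> connect (adj E) y v -> (v < u)%N)).

Definition pf_cover n (Q Q' : {set edge n}) : Prop :=
  is_prio_forest Q /\ is_prio_forest Q' /\ Q \proper Q' /\
  (forall R, is_prio_forest R -> Q \subset R -> R \subset Q' -> R = Q \/ R = Q').

Definition lambda n (Q Q' : {set edge n}) : nat :=
  if [pick e in Q' :\: Q] is Some e then maxn e.1 e.2 else 0.

Definition max_chain (m n : nat) (P : {set edge n})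
    (c : {ffun 'I_m.+1 -> {set edge n}}) : Prop :=
  c ord0 = set0 /\ c ord_max = P /\
  (forall k : 'I_m, pf_cover (c (inord k)) (c (inord k.+1))).

(** Jordan-Hoelder permutation: i |-> lambda(P_{i-1}, P_i), i in [m];
    here applied to k = i-1 : 'I_m *)
Definition JH (m n : nat) (c : {ffun 'I_m.+1 -> {set edge n}}) (k : 'I_m) : nat :=
  lambda (c (inord k)) (c (inord k.+1)).

From mathcomp Require Import all_boot zify.
Set Implicit Arguments. Unset Strict Implicit. Unset Printing Implicit Defensive.

(* Let [P_k] be the part of the priority forest formed by the edges ending at the visits of the
   labels [1..k]; the chain [P_0 <. ... <. P_m] has Jordan-Hoelder permutation [tau^-1].
   Each [P_k] is a priority forest because its components are intervals of steps: every step
   strictly between the visits of [par v] and [v] visits a label smaller than [v], since [v] is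
   unblocked meanwhile and the search always picks the least unblocked label.  Conversely, the
   label [tau^-1 (k)] of a cover step names the larger endpoint of the new edge, and a single
   edge of [P] ends there, so any chain with that permutation must be the one above. *)

Lemma foldl_minn_mem a s : a \in s -> foldl minn a s \in s.
Proof.
move=> a_s; rewrite (foldl_foldr minnA minnC).
have : foldr minn a s \in a :: s.
  elim: s {a_s} => [|x s IHs] /=; first exact: mem_head.
  rewrite /minn; case: ifP => _; first by rewrite !inE eqxx orbT.
  by move: IHs; rewrite !inE => /orP[->|->]; rewrite ?orbT.
by rewrite inE => /orP[/eqP->|].
Qed.

Lemma foldl_minn_leq a s x : x \in s -> foldl minn a s <= x.
Proof.
rewrite (foldl_foldr minnA minnC).
by elim: s => [|y s IHs] //=; rewrite inE geq_min => /orP[/eqP->|/IHs->];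
  rewrite ?leqnn ?orbT.
Qed.

Section PrioritySearch.
Variables (m n : nat) (par : nat -> nat + nat).
Notation ps := (psearch m n par).

Lemma mem_kids v i : (i \in kids m par v) = (1 <= i <= m) && (par i == v).
Proof. by rewrite mem_filter mem_iota andbC; congr (_ && _); lia. Qed.

Lemma kids_uniq v : uniq (kids m par v).
Proof. exact/filter_uniq/iota_uniq. Qed.

Lemma size_psearch fuel j F : size (ps fuel j F) <= fuel.
Proof.
elim: fuel j F => [|fuel IH] j [|y F] //=; last exact: IH.
by case: ifP => //= _; apply: IH.
Qed.

Lemma psearch_frontier fuel j y F (x := foldl minn y (y :: F)) :
  ps fuel.+1 j (y :: F) = inr x :: ps fuel j (rem x (y :: F) ++ kids m par (inr x)).
Proof. by []. Qed.

Lemma psearch_next_tree fuel j : ps fuel.+1 j [::] =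
  if j < n - m then inl j.+1 :: ps fuel j.+1 (kids m par (inl j.+1)) else [::].
Proof. by []. Qed.

Definition unblocked (F : seq nat) (V : seq (nat + nat)) (v : nat) :=
  (v \in F) || (par v \in V).

Lemma psearch_visits_unblocked fuel j F t x :
  nth (inl 0) (ps fuel j F) t = inr x -> unblocked F (take t (ps fuel j F)) x.
Proof.
rewrite /unblocked; elim: fuel j F t => [|fuel IH] j F t; first by rewrite nth_nil.
case: F => [|y F].
  rewrite psearch_next_tree; case: ifP => [_|_]; last by rewrite nth_nil.
  case: t => //= t /IH.
  by rewrite in_cons mem_kids => /orP[/andP[_ ->]|->]; rewrite ?orbT.
rewrite psearch_frontier; set x0 := foldl _ _ _; set F' := rem x0 _.
case: t => /= [[<-]|t /IH].
  by rewrite foldl_minn_mem ?mem_head.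
rewrite mem_cat mem_kids [par x \in _]in_cons.
by case/orP=> [/orP[/mem_rem->|/andP[_ ->]]|->]; rewrite ?orbT.
Qed.

Lemma psearch_visits_min fuel j F t v : 1 <= v <= m -> t < size (ps fuel j F) ->
  unblocked F (take t (ps fuel j F)) v -> inr v \notin take t (ps fuel j F) ->
  exists2 y, nth (inl 0) (ps fuel j F) t = inr y & y <= v.
Proof.
rewrite /unblocked => v_lab; elim: fuel j F t => [|fuel IH] j F t //.
case: F => [|y F].
  rewrite psearch_next_tree; case: ifP => // _; case: t => //= t.
  rewrite ltnS !in_cons => t_lt v_unbl /norP[_ v_new]; apply: IH => //.
  by rewrite mem_kids v_lab; case/orP: v_unbl => [/eqP->|->]; rewrite ?eqxx ?orbT.
rewrite psearch_frontier; set x0 := foldl _ _ _; set F' := rem x0 _.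
case: t => /= [_ /orP[v_in _|//]|t]; first by exists x0; rewrite // foldl_minn_leq.
rewrite ltnS [par v \in _]in_cons [inr v \in _]in_cons.
move=> t_lt v_unbl /norP[v_x0 v_new]; apply: IH => //; rewrite mem_cat mem_kids v_lab.
have v_ne : v != x0 by apply: contra v_x0 => /eqP->.
by case/orP: v_unbl => [/(rem_mem v_ne)->|/orP[->|->]]; rewrite ?orbT.
Qed.
End PrioritySearch.

Section SearchInvariant.
Variables (m n : nat) (par : nat -> nat + nat).
Notation ps := (psearch m n par).
Notation label i := (1 <= i <= m).

Definition visitable (w : nat + nat) : bool :=
  match w with inl j => 1 <= j <= n - m | inr x => label x end.

Record search_inv (V : seq (nat + nat)) (j : nat) (F : seq nat) : Prop := {
  inv_uniqV : uniq V;
  inv_uniqF : uniq F;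
  inv_visitable : all visitable V;
  inv_labels : all (fun i => label i) F;
  inv_tree : j <= n - m;
  inv_roots : forall k, (inl k \in V) = (1 <= k <= j);
  inv_seen : forall i, inr i \in V -> i \notin F;
  inv_frontier : forall i, label i ->
    (inr i \in V) || (i \in F) = (par i \in V) || (par i == inl 0) }.

Lemma search_inv_init : search_inv [::] 0 (kids m par (inl 0)).
Proof.
split=> //; first exact: kids_uniq.
- by apply/allP => i; rewrite mem_kids => /andP[].
- by move=> [|[|k]].
- by move=> i i_lab; rewrite mem_kids i_lab.
Qed.

Lemma search_inv_visit V j F x : search_inv V j F -> x \in F ->
  search_inv (rcons V (inr x)) j (rem x F ++ kids m par (inr x)).
Proof.
case=> uV uF visV labF j_le rootsV seenV frontV xF.
have xNV : inr x \notin V by apply: contraL xF => /seenV.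
have x_lab : label x by apply: (allP labF).
have kids_new i : i \in kids m par (inr x) -> (inr i \notin V) && (i \notin F).
  rewrite mem_kids => /andP[i_lab /eqP par_i].
  by rewrite -negb_or frontV // par_i (negbTE xNV).
split.
- by rewrite rcons_uniq xNV uV.
- rewrite cat_uniq rem_uniq // kids_uniq andbT /=.
  by apply/hasPn => i /kids_new /andP[_]; apply: contra => /mem_rem.
- by rewrite all_rcons /= x_lab.
- apply/allP => i; rewrite mem_cat => /orP[/mem_rem/(allP labF)//|].
  by rewrite mem_kids => /andP[].
- done.
- by move=> k; rewrite mem_rcons in_cons rootsV.
- move=> i; rewrite mem_rcons in_cons mem_cat negb_or => /orP[/eqP[->]|iV].
    rewrite mem_rem_uniqF //= mem_kids x_lab /=; apply: contra xNV => /eqP par_x.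
    by have := frontV x x_lab; rewrite xF par_x orbT => /esym/orP[].
  rewrite (contra (@mem_rem _ _ _ _) (seenV i iV)) /=.
  by apply/negP => /kids_new; rewrite iV.
- move=> i i_lab; rewrite !mem_rcons !in_cons mem_cat mem_kids i_lab /=.
  rewrite (mem_rem_uniq _ uF) inE -[in RHS]orbA -(frontV i i_lab) (inj_eq (@inr_inj _ _)).
  have [->|i_x] := eqVneq i x; first by rewrite xF !orbT.
  by case: (inr i \in V); case: (i \in F); case: (par i == inr x).
Qed.

Lemma search_inv_next_tree V j : search_inv V j [::] -> j < n - m ->
  search_inv (rcons V (inl j.+1)) j.+1 (kids m par (inl j.+1)).
Proof.
case=> uV _ visV _ _ rootsV _ frontV j_lt.
have rootNV : inl j.+1 \notin V by rewrite rootsV ltnn andbF.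
split.
- by rewrite rcons_uniq rootNV uV.
- exact: kids_uniq.
- by rewrite all_rcons /= j_lt visV.
- by apply/allP => i; rewrite mem_kids => /andP[].
- done.
- by move=> k; rewrite mem_rcons in_cons rootsV (inj_eq (@inl_inj _ _)); lia.
- move=> i; rewrite mem_rcons in_cons mem_kids /= => iV; apply/negP => /andP[i_lab /eqP par_i].
  by have := frontV i i_lab; rewrite iV par_i (negbTE rootNV).
- move=> i i_lab; have := frontV i i_lab.
  rewrite in_nil orbF !mem_rcons !in_cons mem_kids i_lab => ->.
  by case: (par i == inl j.+1); case: (par i \in V); case: (par i == inl 0).
Qed.

Hypothesis forest : is_ordforest m n par.

Lemma search_inv_complete V : search_inv V (n - m) [::] -> forall i, label i -> inr i \in V.
Proof.
case: forest => _ [par_range acyclic] [_ _ _ _ _ rootsV _ frontV] i i_lab.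
have [t] := acyclic i i_lab; elim: t i i_lab => [|t IHt] i i_lab //; rewrite iterSr /=.
have := frontV i i_lab; rewrite in_nil orbF => ->.
have := par_range i i_lab; case: (par i) => [a a_le _|y y_lab /IHt-> //].
by rewrite rootsV; case: a a_le => //= a; lia.
Qed.

Lemma psearch_search_inv fuel V j F : search_inv V j F ->
  [/\ uniq (V ++ ps fuel j F), all visitable (V ++ ps fuel j F) &
      size (ps fuel j F) < fuel -> forall i, label i -> inr i \in V ++ ps fuel j F].
Proof.
elim: fuel V j F => [|fuel IH] V j F inv; first by rewrite cats0; case: inv.
case: F inv => [|y F] inv.
  rewrite psearch_next_tree; case: ifP => j_lt.
    by rewrite -cat_rcons; have [] := IH _ _ _ (search_inv_next_tree inv j_lt).
  rewrite cats0; case: (inv) => uV _ visV _ j_le _ _ _; split=> // _.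
  by apply: search_inv_complete; have -> : n - m = j by lia.
rewrite psearch_frontier -cat_rcons.
by have [] := IH _ _ _ (search_inv_visit inv (foldl_minn_mem (mem_head _ _))).
Qed.

Notation vo := (visit_order m n par).

Lemma visit_order_uniq : uniq vo.
Proof. by have [] := psearch_search_inv n search_inv_init. Qed.

Lemma visit_order_visitable : all visitable vo.
Proof. by have [] := psearch_search_inv n search_inv_init. Qed.

(* If the search used up all [n] steps, it visited [n] distinct visitable nodes: all of them. *)
Lemma mem_visit_order i : label i -> inr i \in vo.
Proof.
move=> i_lab; have [_ _ complete] := psearch_search_inv n search_inv_init.
have [/complete/(_ i i_lab)//|size_vo] := ltnP (size vo) n.
pose nodes := [seq inr x | x <- iota 1 m] ++ [seq inl k | k <- iota 1 (n - m)].
have vo_nodes : {subset vo <= nodes}.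
  move=> [k|x] /(allP visit_order_visitable) /= w_vis; rewrite mem_cat !mem_map ?mem_iota;
    by [lia | exact: inl_inj | exact: inr_inj].
have size_nodes : size nodes <= size vo.
  by rewrite size_cat !size_map !size_iota; case: forest; lia.
have [_ ->] := uniq_min_size visit_order_uniq vo_nodes size_nodes.
by rewrite mem_cat mem_map ?mem_iota; [lia | exact: inr_inj].
Qed.
End SearchInvariant.

Section VisitingSteps.
Variables (m n : nat) (par : nat -> nat + nat).
Hypothesis forest : is_ordforest m n par.
Notation vo := (visit_order m n par).
Notation st := (step_of m n par).
Notation label i := (1 <= i <= m).

Lemma step_of_inr x : st (inr x) = (index (inr x) vo).+1.
Proof. by []. Qed.

Lemma step_of_label_le x : label x -> st (inr x) <= n.
Proof.
move=> x_lab; rewrite step_of_inr.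
by apply: (@leq_trans (size vo)); [rewrite index_mem mem_visit_order | apply: size_psearch].
Qed.

Lemma par_visited_before x : label x ->
  par x = inl 0 \/ index (par x) vo < index (inr x) vo.
Proof.
move=> x_lab; have x_vo := mem_visit_order forest x_lab.
have := @psearch_visits_unblocked m n par n 0 _ (index (inr x) vo) x (nth_index _ x_vo).
by case/orP=> [|/index_ltn]; [rewrite mem_kids => /andP[_ /eqP]; left | right].
Qed.

Lemma step_of_par_lt x : label x -> st (par x) < st (inr x).
Proof. by rewrite /step_of; case/par_visited_before => [->|]; case: eqP. Qed.

Lemma step_of_inj x y : label x -> label y -> st (inr x) = st (inr y) -> x = y.
Proof.
move=> x_lab y_lab /succn_inj same_index.
have := nth_index (inl 0) (mem_visit_order forest x_lab).
by rewrite same_index nth_index ?mem_visit_order // => -[].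
Qed.

(* During these steps [v] is unblocked, and the search always picks the least unblocked label. *)
Lemma step_of_between v z : label v -> st (par v) < z < st (inr v) ->
  exists2 y, 0 < y < v & st (inr y) = z.
Proof.
move=> v_lab /andP[par_z z_v]; have v_vo := mem_visit_order forest v_lab.
have [t z_eq] : exists t, z = t.+1 by exists z.-1; lia.
rewrite z_eq step_of_inr ltnS in z_v *.
have t_lt : t < size vo by apply: ltn_trans z_v _; rewrite index_mem.
have v_new : inr v \notin take t vo by rewrite in_take // -leqNgt ltnW.
have v_unbl : unblocked par (kids m par (inl 0)) (take t vo) v.
  rewrite /unblocked mem_kids v_lab in_take_leq ?(ltnW t_lt) //.
  have [->|par_v] := eqVneq (par v) (inl 0); first by [].
  by move: par_z; rewrite /step_of (negbTE par_v) z_eq ltnS => ->; rewrite orbT.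
have [y nth_y y_v] := psearch_visits_min v_lab t_lt v_unbl v_new.
have y_lab : label y.
  by have := allP (visit_order_visitable forest) _ (mem_nth (inl 0) t_lt); rewrite nth_y.
have index_y : index (inr y) vo = t by rewrite -nth_y index_uniq // (visit_order_uniq forest).
exists y; last by rewrite step_of_inr index_y.
rewrite [y < v]ltn_neqAle y_v andbT; case/andP: y_lab => -> _ /=.
by apply: contraTneq z_v => <-; rewrite index_y ltnn.
Qed.
End VisitingSteps.

Section ConvexComponents.
Variable n : nat.
Implicit Types (E : {set edge n}) (x y z : 'I_n.+1).

Lemma adj_sym E : symmetric (adj E).
Proof. by move=> x y; rewrite /adj orbC. Qed.

Lemma connect_adjC E x y : connect (adj E) x y = connect (adj E) y x.
Proof. exact: sym_connect_sym (adj_sym E) x y. Qed.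

Lemma connect_adj_sub E E' : E \subset E' -> subrel (connect (adj E)) (connect (adj E')).
Proof.
move=> sEE'; apply: connect_sub => x y /orP[] xy; apply: connect1;
  by rewrite /adj (subsetP sEE' _ xy) ?orbT.
Qed.

Definition convex_components E :=
  forall x y z, connect (adj E) x y -> (x <= z <= y)%N -> connect (adj E) x z.

Lemma convex_connect_between E c w z : convex_components E -> connect (adj E) c w ->
  (c <= z <= w)%N || (w <= z <= c)%N -> connect (adj E) c z.
Proof.
move=> convE cw /orP[/(convE _ _ _ cw)//|/(convE w c z)].
by rewrite connect_adjC => /(_ cw); apply: connect_trans.
Qed.

Lemma convex_components_lt E x y : convex_components E -> ~~ connect (adj E) x y ->
  (x < y)%N -> forall u v, connect (adj E) x u -> connect (adj E) y v -> (u < v)%N.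
Proof.
move=> convE xNy x_y u v xu yv; rewrite ltnNge; apply: contra xNy => v_u.
have [v_x|x_v] := ltnP v x.
  have vy : connect (adj E) v y by rewrite connect_adjC.
  have vx : connect (adj E) v x by apply: convE vy _; rewrite (ltnW v_x) (ltnW x_y).
  by rewrite connect_adjC in vx; apply: connect_trans vx vy.
have xv : connect (adj E) x v by apply: convE xu _; rewrite x_v v_u.
by apply: connect_trans xv _; rewrite connect_adjC.
Qed.

Lemma prio_forest_convex E :
  (forall e, e \in E -> (e.1 < e.2)%N) ->
  (forall e e', e \in E -> e' \in E -> e.2 = e'.2 -> e = e') ->
  convex_components E -> is_prio_forest E.
Proof.
move=> E_incr E_par convE; do 2!split=> //; move=> x y xNy.
have [x_y|y_x|/val_inj x_y] := ltngtP x y.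
- by left; apply: convex_components_lt.
- right=> u v xu yv; apply: convex_components_lt yv xu => //; by rewrite connect_adjC.
- by rewrite x_y connect0 in xNy.
Qed.

Lemma convex_components0 : convex_components set0.
Proof.
move=> x y z /connectP[[|w p] /=]; last by rewrite /adj !inE.
by move=> _ ->; rewrite -eqn_leq => /eqP/val_inj->.
Qed.

Lemma connect_adjU1 E (e : edge n) x y
    (U := [pred z | connect (adj E) e.1 z || connect (adj E) e.2 z]) :
  connect (adj (E :|: [set e])) x y -> connect (adj E) x y || (U x && U y).
Proof.
case: e @U => p s U.
have U_conn a b : connect (adj E) a b -> U a = U b.
  by move=> ab; rewrite /= !(same_connect_r (sym_connect_sym (adj_sym E)) ab).
pose R a b := connect (adj E) a b || (U a && U b).
have R_trans a b c : R a b -> R b c -> R a c.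
  rewrite /R => /orP[ab|/andP[Ua Ub]] /orP[bc|/andP[Ub' Uc]].
  - by rewrite (connect_trans ab bc).
  - by rewrite (U_conn _ _ ab) Ub' Uc orbT.
  - by rewrite -(U_conn _ _ bc) Ua Ub orbT.
  - by rewrite Ua Uc orbT.
have R_adj a b : adj (E :|: [set (p, s)]) a b -> R a b.
  rewrite /adj !inE !xpair_eqE /R.
  case/orP=> [/orP[ab|/andP[/eqP-> /eqP->]]|/orP[ba|/andP[/eqP-> /eqP->]]].
  - by rewrite connect1 // /adj ab.
  - by rewrite /= !connect0 !orbT.
  - by rewrite connect1 // /adj ba orbT.
  - by rewrite /= !connect0 !orbT.
move/connectP=> [q]; elim: q x => [|b q IHq] a /= => [_ ->|/andP[/R_adj ab /IHq bq /bq]].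
  by rewrite /R connect0.
exact: R_trans.
Qed.

Lemma convex_componentsU1 E (e : edge n) : convex_components E -> (e.1 < e.2)%N ->
  (forall z, (e.1 <= z < e.2)%N -> connect (adj E) e.1 z) ->
  convex_components (E :|: [set e]).
Proof.
case: e => p s; set E' := E :|: _ => convE /= p_s p_conn x y z xy /andP[x_z z_y].
have sub_E' := connect_adj_sub (subsetUl E [set (p, s)]).
set U := [pred w | connect (adj E) p w || connect (adj E) s w].
have U_p w : U w -> connect (adj E') p w.
  case/orP=> [/sub_E'//|/sub_E']; apply: connect_trans.
  by apply: connect1; rewrite /adj !inE eqxx !orbT.
case/orP: (connect_adjU1 xy) => [xy_E|/andP[Ux Uy]].
  by apply/sub_E'/(convE _ _ _ xy_E); rewrite x_z.
suff Uz : U z by apply: connect_trans (U_p z Uz); rewrite connect_adjC; apply: U_p.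
have U_between c w : (c == p) || (c == s) -> connect (adj E) c w ->
    (c <= z <= w)%N || (w <= z <= c)%N -> U z.
  by case/orP=> /eqP-> cw /(convex_connect_between convE cw) cz; rewrite /= cz ?orbT.
have [z_p|p_z] := ltnP z p.
  by case/orP: Ux => [px|sx]; [apply: (U_between p x) | apply: (U_between s x)];
    rewrite ?eqxx ?orbT //; apply/orP; right; lia.
have [z_s|s_z] := ltnP z s; first by rewrite /= p_conn ?p_z.
by case/orP: Uy => [py|sy]; [apply: (U_between p y) | apply: (U_between s y)];
  rewrite ?eqxx ?orbT //; apply/orP; left; lia.
Qed.
End ConvexComponents.

Lemma lambdaU1 n (Q : {set edge n}) e : e \notin Q -> lambda Q (Q :|: [set e]) = maxn e.1 e.2.
Proof.
rewrite /lambda => eNQ; case: pickP => [e'|/(_ e)]; rewrite !inE; last by rewrite eNQ eqxx orbT.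
by case/andP=> e'NQ /orP[e'Q|/eqP->] //; rewrite e'Q in e'NQ.
Qed.

Section PrefixForests.
Variables (m n : nat) (par : nat -> nat + nat).
Hypothesis forest : is_ordforest m n par.
Notation st := (step_of m n par).
Notation P := (prio_forest m n par).

Definition prio_edge (i : 'I_m) : edge n :=
  (inord (st (par i.+1)), inord (st (inr i.+1))).

Definition prefix_forest (k : nat) : {set edge n} :=
  [set prio_edge i | i : 'I_m & (i < k)%N].

Lemma label_ord (i : 'I_m) : 1 <= i.+1 <= m.
Proof. by rewrite ltn_ord. Qed.

Lemma prio_edge2 i : val (prio_edge i).2 = st (inr i.+1).
Proof. by rewrite /= inordK // ltnS (step_of_label_le forest (label_ord i)). Qed.

Lemma prio_edge1 i : val (prio_edge i).1 = st (par i.+1).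
Proof.
rewrite /= inordK // ltnS ltnW // (leq_trans (step_of_par_lt forest (label_ord i))) //.
exact: step_of_label_le (label_ord i).
Qed.

Lemma prio_edge_lt i : ((prio_edge i).1 < (prio_edge i).2)%N.
Proof. by rewrite prio_edge1 prio_edge2 (step_of_par_lt forest (label_ord i)). Qed.

Lemma prio_edge_inj i j : (prio_edge i).2 = (prio_edge j).2 -> i = j.
Proof.
move/(congr1 val); rewrite !prio_edge2 => /(step_of_inj forest (label_ord i) (label_ord j)).
by move=> [/val_inj].
Qed.

Lemma mem_prefix_forest k e :
  reflect (exists2 i : 'I_m, (i < k)%N & e = prio_edge i) (e \in prefix_forest k).
Proof. by apply: (iffP imsetP) => -[i]; rewrite ?inE => i_k ->; exists i; rewrite ?inE. Qed.

Lemma prefix_forest0 : prefix_forest 0 = set0.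
Proof. by apply/setP => e; rewrite inE; apply/mem_prefix_forest => -[]. Qed.

Lemma prefix_forest_all : prefix_forest m = P.
Proof. by apply/setP => e; apply/mem_prefix_forest/imsetP => -[i _ ->]; exists i. Qed.

Lemma prefix_forestS (k : 'I_m) : prefix_forest k.+1 = prefix_forest k :|: [set prio_edge k].
Proof.
apply/setP => e; rewrite inE in_set1; apply/mem_prefix_forest/orP.
  case=> i; rewrite ltnS leq_eqVlt => /orP[/eqP/val_inj-> ->|i_k ->]; first by right.
  by left; apply/mem_prefix_forest; exists i.
by case=> [/mem_prefix_forest[i i_k ->]|/eqP->]; [exists i => //; apply: ltnW | exists k].
Qed.

Lemma prio_edge_notin (k : 'I_m) : prio_edge k \notin prefix_forest k.
Proof.
by apply/mem_prefix_forest => -[i i_k /(congr1 snd)/prio_edge_inj k_i]; rewrite k_i ltnn in i_k.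
Qed.

(* By [step_of_between], every step between the endpoints of the edge of label [k+1] is already
   connected to its lower endpoint, so adding that edge keeps the components convex. *)
Lemma prefix_forest_convex k : k <= m -> convex_components (prefix_forest k).
Proof.
elim: k => [|k IHk] k_le; first by rewrite prefix_forest0; apply: convex_components0.
pose kk := Ordinal k_le; have convQ := IHk (ltnW k_le).
rewrite (prefix_forestS kk); apply: convex_componentsU1 => //; first exact: prio_edge_lt.
set p := (prio_edge kk).1 => z; have [N] := ubnP z; elim: N z => // N IHN z z_N.
case/andP=> p_z z_s; have [/val_inj->|p_ne_z] := eqVneq (val p) (val z); first exact: connect0.
have p_lt_z : (p < z)%N by rewrite ltn_neqAle p_ne_z.
have [y /andP[y_pos y_k] st_y] : exists2 y, 0 < y < k.+1 & st (inr y) = z.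
  by apply: (step_of_between forest (label_ord kk)); rewrite -prio_edge1 -prio_edge2 p_lt_z.
have y_m : y.-1 < m by lia.
pose i := Ordinal y_m; have iQ : prio_edge i \in prefix_forest k.
  by apply/mem_prefix_forest; exists i; rewrite //= -ltnS prednK.
have i_z : (prio_edge i).2 = z by apply: val_inj; rewrite prio_edge2 /= prednK.
have qz : connect (adj (prefix_forest k)) (prio_edge i).1 z.
  by apply: connect1; rewrite /adj -i_z -surjective_pairing iQ.
have q_z : ((prio_edge i).1 < z)%N by rewrite -i_z prio_edge_lt.
apply: (connect_trans _ qz); have [p_q|q_p] := leqP p (prio_edge i).1.
  by apply: IHN; [lia | rewrite p_q (ltn_trans q_z z_s)].
by rewrite connect_adjC; apply: convQ qz _; rewrite (ltnW q_p) p_z.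
Qed.

Lemma prefix_forest_prio k : k <= m -> is_prio_forest (prefix_forest k).
Proof.
move=> k_le; apply: prio_forest_convex; last exact: prefix_forest_convex.
  by move=> e /mem_prefix_forest[i _ ->]; apply: prio_edge_lt.
by move=> e e' /mem_prefix_forest[i _ ->] /mem_prefix_forest[j _ ->] /prio_edge_inj->.
Qed.

Lemma prefix_forest_cover (k : 'I_m) : pf_cover (prefix_forest k) (prefix_forest k.+1).
Proof.
have k_le : k.+1 <= m by [].
rewrite prefix_forestS; split; first exact: prefix_forest_prio (ltnW k_le).
split; first by rewrite -prefix_forestS; apply: prefix_forest_prio.
split; first by rewrite properUl // sub1set prio_edge_notin.
move=> R _ sQR sRQ; have [kR|kNR] := boolP (prio_edge k \in R).
  by right; apply/eqP; rewrite eqEsubset sRQ subUset sQR sub1set kR.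
left; apply/eqP; rewrite eqEsubset sQR andbT; apply/subsetP => e eR.
by have := subsetP sRQ e eR; rewrite !inE => /orP[//|/eqP e_k]; rewrite -e_k eR in kNR.
Qed.

Lemma lambda_prefix_forest (k : 'I_m) :
  lambda (prefix_forest k) (prefix_forest k.+1) = st (inr k.+1).
Proof.
rewrite prefix_forestS lambdaU1 ?prio_edge_notin // -prio_edge2.
exact/maxn_idPr/ltnW/prio_edge_lt.
Qed.

Lemma prefix_forest_cover_unique (k : 'I_m) Q : pf_cover (prefix_forest k) Q ->
  Q \subset P -> lambda (prefix_forest k) Q = st (inr k.+1) -> Q = prefix_forest k.+1.
Proof.
move=> [_ [_ [sub_Q maxQ]]] Q_P lambda_Q.
have kQ : prio_edge k \in Q.
  move: lambda_Q; rewrite /lambda; case: pickP => [e|_]; last by rewrite step_of_inr.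
  rewrite inE => /andP[_ eQ] e_max.
  have /mem_prefix_forest[i _ e_i] : e \in prefix_forest m.
    by rewrite prefix_forest_all (subsetP Q_P).
  suff i_k : i = k by rewrite -i_k -e_i.
  apply/prio_edge_inj/val_inj; rewrite [RHS]prio_edge2 -e_max e_i.
  exact/esym/maxn_idPr/ltnW/prio_edge_lt.
have := maxQ _ (prefix_forest_prio (ltn_ord k)); rewrite prefix_forestS subsetUl subUset.
rewrite sub1set kQ (proper_sub sub_Q) => /(_ isT isT) [/setP/(_ (prio_edge k))|//].
by rewrite !inE eqxx orbT (negbTE (prio_edge_notin k)).
Qed.
End PrefixForests.

Lemma max_chain_sub m n (P : {set edge n}) (c : {ffun 'I_m.+1 -> {set edge n}}) :
  max_chain P c -> forall k, c k \subset P.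
Proof.
case=> _ [cm ccov] k; rewrite -[k]inord_val -(subKn (leq_ord k)).
elim: (m - k) => [|d IHd].
  rewrite subn0 -cm; have -> // : inord m = ord_max :> 'I_m.+1.
  by apply: val_inj; rewrite /= inordK.
have [d_lt|d_ge] := ltnP d m; last by move: IHd; have -> : m - d.+1 = m - d by lia.
have j_lt : m - d.+1 < m by lia.
case: (ccov (Ordinal j_lt)) => _ [_ [/proper_sub sub_c _]].
by apply: subset_trans sub_c _; rewrite /= subnSK.
Qed.

Section PrefixChain.
Variables (m n : nat) (par : nat -> nat + nat).
Hypothesis forest : is_ordforest m n par.
Notation P := (prio_forest m n par).

Definition prefix_chain : {ffun 'I_m.+1 -> {set edge n}} :=
  [ffun k : 'I_m.+1 => prefix_forest m n par k].

Lemma prefix_chain_inord k : k <= m -> prefix_chain (inord k) = prefix_forest m n par k.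
Proof. by move=> k_le; rewrite ffunE inordK. Qed.

Lemma prefix_chain_max : max_chain P prefix_chain.
Proof.
split; first by rewrite ffunE prefix_forest0.
split; first by rewrite ffunE prefix_forest_all.
move=> k; have k_lt := ltn_ord k.
by rewrite !prefix_chain_inord ?(ltnW k_lt) //; apply: prefix_forest_cover.
Qed.

Lemma JH_prefix_chain k : JH prefix_chain k = tau_inv m n par k.+1.
Proof.
have k_lt := ltn_ord k.
by rewrite /JH !prefix_chain_inord ?(ltnW k_lt) // lambda_prefix_forest.
Qed.

Lemma max_chain_JH_eq c : max_chain P c ->
  (forall k, JH c k = tau_inv m n par k.+1) -> c = prefix_chain.
Proof.
move=> c_max c_JH; have [c0 [_ ccov]] := c_max.
suff c_prefix k : k <= m -> c (inord k) = prefix_forest m n par k.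
  by apply/ffunP => k; rewrite -[k]inord_val c_prefix ?prefix_chain_inord // -ltnS.
elim: k => [|k IHk] k_le.
  rewrite prefix_forest0 -c0; have -> // : inord 0 = ord0 :> 'I_m.+1.
  by apply: val_inj; rewrite /= inordK.
have := ccov (Ordinal k_le); rewrite /= IHk ?(ltnW k_le) // => c_cover.
apply: (prefix_forest_cover_unique forest (k := Ordinal k_le) c_cover).
  exact: max_chain_sub c_max _.
by have := c_JH (Ordinal k_le); rewrite /JH /= IHk ?(ltnW k_le).
Qed.
End PrefixChain.

Theorem lemma3p3 (m n : nat) (par : nat -> nat + nat) :
  is_ordforest m n par ->
  exists! c : {ffun 'I_m.+1 -> {set edge n}},
    max_chain (prio_forest m n par) c /\
    (forall k : 'I_m, JH c k = tau_inv m n par k.+1).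
Proof.
move=> forest; exists (prefix_chain m n par); split.
  by split; [apply: prefix_chain_max | apply: JH_prefix_chain].
by move=> c [c_max c_JH]; apply/esym/max_chain_JH_eq.
Qed.
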